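(* Let $\mathbb{K}$ be a field and $f=a_0(x)+a_1(x)y+\cdots+a_n(x)y^n\in\mathbb{K}[x,y]$ with $n\geq 2$, $a_0,\ldots,a_n\in\mathbb{K}[x]$, $a_0a_n\neq 0$. Assume that $f$ has no nonconstant factor in $\mathbb{K}[x]$. If there exists an index $j$ with $0\leq j\leq n-1$ such that $$\deg a_j>\max_{i\neq j}\{\deg a_i+(j-i)\deg a_n\},$$ then $f$ is a product of at most $n-j$ irreducible polynomials over $\mathbb{K}[x]$. In particular, if $j=n-1$, then $f$ is irreducible over $\mathbb{K}[x]$.
   Context: $f$ is regarded as a polynomial in $y$ with coefficients in $\mathbb{K}[x]$; ''a product of at most $k$ irreducible polynomials over $\mathbb{K}[x]$'' means that in the factorization of $f$ into irreducible elements of $\mathbb{K}[x][y]$ the number of factors, counted with multiplicities, is at most $k$. *)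

From HB Require Import structures.
From mathcomp Require Import all_boot all_order all_algebra.
Set Implicit Arguments. Unset Strict Implicit. Unset Printing Implicit Defensive.
Import Order.TTheory GRing.Theory Num.Theory.
Local Open Scope ring_scope.

(* Divisibility in the ring R (genuine ring divisibility, not MathComp's
   pseudo-division %| on polynomials). *)
Definition ring_dvd (R : comRingType) (d p : R) : Prop := exists g : R, p = d * g.

Definition irreducible_elt (R : idomainType) (p : R) : Prop :=
  p != 0 /\ p \isn't a GRing.unit /\
  forall q r : R, p = q * r -> q \is a GRing.unit \/ r \is a GRing.unit.

Definition degz (K : fieldType) (p : {poly K}) : int := ((size p).-1)%:Z.

From HB Require Import structures.
From mathcomp Require Import all_boot all_order all_algebra.
From mathcomp Require Import zify.
From Stdlib Require Import Classical.
Set Implicit Arguments. Unset Strict Implicit. Unset Printing Implicit Defensive.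
Import Order.TTheory GRing.Theory Num.Theory.
Local Open Scope ring_scope.

(* Give the coefficient a_i of a polynomial in y the weight deg a_i - i d, where
   d = deg a_n.  Like the leading term for a monomial order, the first index at
   which the weight reaches its maximum is additive under multiplication, and for
   f it is j.  Let q be an irreducible factor of f.  It has positive y-degree m
   because f is primitive, q(x, 0) <> 0, and deg lead_coef q <= d because
   lead_coef q divides a_n.  If the first maximal index of q were m, its maximal
   weight would be at most d - m d <= 0, yet strictly larger than the weight
   deg q(x, 0) >= 0 of index 0.  So the index of q is below m, and summing over
   the factors gives j + #factors <= n. *)

Lemma size_sum_leq (R : nzSemiRingType) (I : finType) (P : pred I)
    (F : I -> {poly R}) (m : nat) :
  (forall i, P i -> (size (F i) <= m)%N) -> (size (\sum_(i | P i) F i)%R <= m)%N.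
Proof. by move=> le_Fm; apply: leq_trans (size_sum _ _ _) _; apply/bigmax_leqP. Qed.

Section DominantIndex.
Variables (R : idomainType) (d : nat).
Implicit Types (G H : {poly {poly R}}) (k W : nat).

(* The weight [deg G`_i - i * d] of the coefficients of [G] is at most [W],
   and [k] is the first index where it equals [W].  Coefficients are wrapped in
   [%R] inside [%N] because there [n`_pi] denotes [partn]. *)
Definition dominant_index G k W :=
  [/\ size G`_k = ((W + k * d).+1)%N,
      forall i, (size (G`_i)%R <= (W + i * d).+1)%N &
      forall i, (i < k)%N -> (size (G`_i)%R <= W + i * d)%N].

Lemma dominant_index_coef_neq0 G k W : dominant_index G k W -> G`_k != 0.
Proof. by case=> Gk _ _; rewrite -size_poly_eq0 Gk. Qed.

Lemma dominant_index_neq0 G k W : dominant_index G k W -> G != 0.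
Proof. by move/dominant_index_coef_neq0; apply: contraNneq => ->; rewrite coef0. Qed.

Lemma dominant_index1 : dominant_index 1 0 0.
Proof.
split=> [|i|//]; first by rewrite coef1 size_poly1.
by rewrite coef1; case: (i == 0)%N; rewrite ?size_poly1 ?size_poly0.
Qed.

Lemma dominant_indexM G H k1 k2 W1 W2 :
  dominant_index G k1 W1 -> dominant_index H k2 W2 ->
  dominant_index (G * H) (k1 + k2) (W1 + W2).
Proof.
move=> [Gk Gle Glt] [Hk Hle Hlt].
have weightD m (i : 'I_m.+1) : (i * d + (m - i) * d = m * d)%N.
  by rewrite -mulnDl subnKC // -ltnS.
have term_le m (i : 'I_m.+1) :
    (size (G`_i * H`_(m - i))%R <= (W1 + W2 + m * d).+1)%N.
  apply: leq_trans (size_polyMleq _ _) _.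
  have := Gle i; have := Hle (m - i)%N; have := weightD m i; lia.
have term_lt m (i : 'I_m.+1) : (i < k1)%N || (m - i < k2)%N ->
    (size (G`_i * H`_(m - i))%R <= W1 + W2 + m * d)%N.
  move=> small; apply: leq_trans (size_polyMleq _ _) _.
  have := Gle i; have := Hle (m - i)%N; have := weightD m i.
  by case/orP: small => [/Glt|/Hlt]; lia.
have k1_le : (k1 < (k1 + k2).+1)%N by rewrite ltnS leq_addr.
split.
- rewrite coefM (bigD1 (Ordinal k1_le)) //= addKn size_polyDl.
    by rewrite size_mul -?size_poly_eq0 ?Gk ?Hk // mulnDl; lia.
  rewrite size_mul -?size_poly_eq0 ?Gk ?Hk //.
  apply: leq_ltn_trans (size_sum_leq (m := W1 + W2 + (k1 + k2) * d) _) _.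
    move=> i ne_ik1; apply: term_lt.
    by move: ne_ik1 (ltn_ord i); rewrite -val_eqE /=; lia.
  by rewrite mulnDl; lia.
- by move=> m; rewrite coefM; apply: size_sum_leq => i _; apply: term_le.
- move=> m lt_m; rewrite coefM; apply: size_sum_leq => i _; apply: term_lt.
  by move: (ltn_ord i); lia.
Qed.

Lemma dominant_index_exists G : G`_0 != 0 -> exists k W, dominant_index G k W.
Proof.
move=> G0_neq0.
have sizeG_gt0 : (0 < size G)%N.
  by rewrite size_poly_gt0; apply: contraNneq G0_neq0 => ->; rewrite coef0.
pose weight i := (size (G`_i)%R - i * d)%N.
pose M := (\max_(i < size G) weight i)%N.
have weight_le i : (weight i <= M)%N.
  have [lt_iG | le_Gi] := ltnP i (size G).
    exact: leq_bigmax (Ordinal lt_iG).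
  by rewrite /weight nth_default // size_poly0.
have M_gt0 : (0 < M)%N.
  by apply: leq_trans (weight_le 0%N); rewrite /weight mul0n subn0 size_poly_gt0.
have attained : exists k, weight k == M.
  have [i Mi] := @bigop.eq_bigmax _ (fun i : 'I_(size G) => weight i)
    (ltac:(by rewrite card_ord)).
  by exists i; rewrite /M Mi.
have [k /eqP wk k_min] := ex_minnP attained.
exists k, M.-1; split=> [|i|i lt_ik].
- by move: wk M_gt0; rewrite /weight; lia.
- by move: (weight_le i) M_gt0; rewrite /weight; lia.
- have : weight i != M by apply: contraTneq lt_ik => wi; rewrite -leqNgt k_min ?wi.
  by move: (weight_le i) M_gt0; rewrite /weight; lia.
Qed.

Lemma dominant_index_unique G k k' W W' :
  dominant_index G k W -> dominant_index G k' W' -> k = k'.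
Proof.
wlog lt_kk' : k k' W W' / (k < k')%N.
  move=> wlog_lt dk dk'; case: (ltngtP k k') => [lt_kk'|lt_k'k|//].
    exact: wlog_lt dk dk'.
  exact/esym/(wlog_lt _ _ _ _ lt_k'k dk' dk).
move=> [Gk Gle _] [Gk' _ Glt'].
by have := Glt' k lt_kk'; have := Gle k'; rewrite Gk Gk'; lia.
Qed.

Lemma dominant_index_lt_size G k W :
  G`_0 != 0 -> (size (lead_coef G) <= d.+1)%N -> (1 < size G)%N ->
  dominant_index G k W -> (k < (size G).-1)%N.
Proof.
move=> G0_neq0 lead_small G_nonconst dG.
have lt_kG : (k < size G)%N.
  by rewrite ltnNge; apply: contra (dominant_index_coef_neq0 dG) => /(nth_default 0) ->.
rewrite ltn_neqAle -ltnS prednK ?lt_kG ?andbT; last exact: ltnW.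
apply/eqP=> k_top; case: dG => Gk _ Glt.
have k_gt0 : (0 < k)%N by rewrite k_top -ltnS prednK //; apply: ltnW.
have := Glt 0%N k_gt0; rewrite mul0n addn0.
have := leq_pmull d k_gt0; have := size_poly_gt0 G`_0; rewrite G0_neq0.
by move: lead_small; rewrite lead_coefE -k_top Gk; lia.
Qed.

Lemma dominant_index_prod (s : seq {poly {poly R}}) :
  (forall q, q \in s -> exists k W, dominant_index q k W /\ (k < (size q).-1)%N) ->
  exists k W, dominant_index (\prod_(q <- s) q) k W /\
              (size s + k < size (\prod_(q <- s) q)%R)%N.
Proof.
elim: s => [_|q s IHs dom_s].
  by exists 0%N, 0%N; rewrite big_nil size_poly1; split; first exact: dominant_index1.
have [kq [Wq [dq lt_kq]]] := dom_s q (mem_head q s).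
have [k [W [ds lt_k]]] : exists k W, dominant_index (\prod_(r <- s) r) k W /\
    (size s + k < size (\prod_(r <- s) r)%R)%N.
  by apply: IHs => r rs; apply: dom_s; rewrite in_cons rs orbT.
exists (kq + k)%N, (Wq + W); rewrite big_cons; split; first exact: dominant_indexM.
move: lt_kq lt_k; set P := \prod_(r <- s) r in ds *.
rewrite size_mul ?(dominant_index_neq0 dq) ?(dominant_index_neq0 ds) //=.
by move: (size q) (size P) => a b; rewrite -!subn1; lia.
Qed.

Lemma size_lead_coef_factor (p q : {poly {poly R}}) :
  p * q != 0 -> (size (lead_coef p) <= size (lead_coef (p * q)))%N.
Proof.
rewrite mulf_eq0 negb_or => /andP[p_neq0 q_neq0].
rewrite lead_coefM size_mul ?lead_coef_eq0 // -subn1 -addnBA ?leq_addr //.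
by rewrite size_poly_gt0 lead_coef_eq0.
Qed.

End DominantIndex.

Lemma dominant_index_of_max (K : fieldType) (G : {poly {poly K}}) (d k : nat) :
  G`_0 != 0 -> G`_k != 0 ->
  (forall i, i != k -> G`_i != 0 -> degz G`_i + (k%:Z - i%:Z) * d%:Z < degz G`_k) ->
  dominant_index d G k ((size (G`_k)%R).-1 - k * d)%N.
Proof.
rewrite /degz => G0_neq0 Gk_neq0 k_max.
have Gk_pos := size_poly_gt0 G`_k; rewrite Gk_neq0 in Gk_pos.
have kd_le : (k * d <= (size (G`_k)%R).-1)%N.
  have [->|k_neq0] := eqVneq k 0%N; first by rewrite mul0n.
  by have := k_max 0%N (ltac:(by rewrite eq_sym)) G0_neq0; lia.
have lt_i i : i != k -> (size (G`_i)%R <= (size (G`_k)%R).-1 - k * d + i * d)%N.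
  move=> ne_ik; have [-> | Gi_neq0] := eqVneq G`_i 0; first by rewrite size_poly0.
  have := size_poly_gt0 G`_i; have := k_max i ne_ik Gi_neq0; rewrite Gi_neq0; lia.
split=> [|i|i lt_ik]; first by rewrite subnK ?prednK.
  by have [->|/lt_i/leqW //] := eqVneq i k; rewrite subnK ?prednK.
by apply: lt_i; rewrite ltn_eqF.
Qed.

Section Factorization.
Variable K : fieldType.
Implicit Types (g p q : {poly {poly K}}).

Definition primitive_poly g := forall c : {poly K}, ring_dvd c%:P g -> (size c <= 1)%N.

Lemma primitive_factor g p q : primitive_poly g -> g = p * q -> primitive_poly p.
Proof. by move=> prim_g gE c [h pE]; apply: prim_g; exists (h * q); rewrite gE pE mulrA. Qed.

Lemma size_nonunit_factor_gt1 g p q :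
  g != 0 -> primitive_poly g -> g = p * q -> p \isn't a GRing.unit -> (1 < size p)%N.
Proof.
move=> g_neq0 prim_g gE; apply: contraR; rewrite -leqNgt => /size1_polyC pE.
have p0_neq0 : p`_0 != 0.
  by rewrite -polyC_eq0 -pE; apply: contraNneq g_neq0 => p0; rewrite gE p0 mul0r.
have /size1_polyC p0E : (size (p`_0)%R <= 1)%N.
  by apply: (primitive_factor prim_g gE); exists 1; rewrite mulr1 -pE.
rewrite pE p0E; apply/rmorph_unit/rmorph_unit; rewrite unitfE.
by rewrite -polyC_eq0 -p0E.
Qed.

Lemma irreducible_factorization g :
  g != 0 -> primitive_poly g -> g \isn't a GRing.unit ->
  exists s, (forall q, q \in s -> irreducible_elt q) /\ g = \prod_(q <- s) q.
Proof.
elim: {g}(size g).+1 {-2}g (ltnSn (size g)) => // N IHN g lt_gN g_neq0 prim_g g_nonunit.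
have [g_irr | g_red] := classic (irreducible_elt g).
  by exists [:: g]; split=> [q|]; rewrite ?big_seq1 // inE => /eqP ->.
have [p [q [gE p_nonunit q_nonunit]]] :
    exists p q, [/\ g = p * q, p \isn't a GRing.unit & q \isn't a GRing.unit].
  apply: NNPP => no_split; apply: g_red; split=> //; split=> // p q gE.
  have [p_unit | p_nonunit] := boolP (p \is a GRing.unit); [by left | right].
  by apply/negPn/negP => q_nonunit; apply: no_split; exists p, q.
have gE' : g = q * p by rewrite gE mulrC.
have p_nonconst := size_nonunit_factor_gt1 g_neq0 prim_g gE p_nonunit.
have q_nonconst := size_nonunit_factor_gt1 g_neq0 prim_g gE' q_nonunit.
have p_neq0 : p != 0 by apply: contraNneq g_neq0 => p0; rewrite gE p0 mul0r.
have q_neq0 : q != 0 by apply: contraNneq g_neq0 => q0; rewrite gE q0 mulr0.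
have size_g : size g = (size p + size q).-1 by rewrite gE size_mul.
have [sp [sp_irr pE]] := IHN p (ltac:(lia)) p_neq0 (primitive_factor prim_g gE) p_nonunit.
have [sq [sq_irr qE]] := IHN q (ltac:(lia)) q_neq0 (primitive_factor prim_g gE') q_nonunit.
exists (sp ++ sq); split; last by rewrite big_cat -pE -qE.
by move=> r; rewrite mem_cat => /orP[/sp_irr | /sq_irr].
Qed.

Lemma nonunit_factor_dominant_index g p q (d : nat) :
  g != 0 -> primitive_poly g -> g`_0 != 0 -> size (lead_coef g) = d.+1 ->
  g = p * q -> p \isn't a GRing.unit ->
  exists k W, dominant_index d p k W /\ (k < (size p).-1)%N.
Proof.
move=> g_neq0 prim_g g0_neq0 size_lead gE p_nonunit.
have p0_neq0 : p`_0 != 0.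
  by move: g0_neq0; rewrite gE coef0M mulf_eq0 negb_or => /andP[].
have [k [W dp]] := dominant_index_exists d p0_neq0.
exists k, W; split=> //; apply: dominant_index_lt_size dp => //.
  by rewrite -size_lead gE size_lead_coef_factor // -gE.
exact: size_nonunit_factor_gt1 gE p_nonunit.
Qed.

End Factorization.

Theorem theorem7 (K : fieldType) (f : {poly {poly K}}) (n j : nat) :
  (2 <= n)%N ->
  size f = n.+1 ->
  f`_0 * f`_n != 0 ->
  (forall d : {poly K}, ring_dvd d%:P f -> (size d <= 1)%N) ->
  (j <= n.-1)%N ->
  f`_j != 0 ->
  (forall i : nat, (i <= n)%N -> i != j -> f`_i != 0 ->
     degz (f`_i) + (j%:Z - i%:Z) * degz (f`_n) < degz (f`_j)) ->
  exists s : seq {poly {poly K}},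
    [/\ (size s <= n - j)%N,
        (forall q, q \in s -> irreducible_elt q) &
        f = \prod_(q <- s) q].
Proof.
move=> n_ge2 size_f f0fn_neq0 prim_f le_jn fj_neq0 j_max.
have /andP[f0_neq0 fn_neq0] : (f`_0 != 0) && (f`_n != 0).
  by rewrite -negb_or -mulf_eq0.
have f_neq0 : f != 0 by rewrite -size_poly_eq0 size_f.
have f_nonunit : f \isn't a GRing.unit.
  by rewrite poly_unitE size_f eqSS gtn_eqF // ltnW.
set d := (size f`_n).-1.
have size_lead : size (lead_coef f) = d.+1.
  by rewrite lead_coefE size_f prednK // size_poly_gt0.
have f_dom : dominant_index d f j ((size (f`_j)%R).-1 - j * d)%N.
  apply: dominant_index_of_max => // i ne_ij fi_neq0; apply: j_max => //.
  by rewrite -ltnS -size_f ltnNge; apply: contra fi_neq0 => /(nth_default 0) ->.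
have [s [s_irr fE]] := irreducible_factorization f_neq0 prim_f f_nonunit.
exists s; split=> //.
have [|k [W [f_dom' lt_k]]] := dominant_index_prod (d := d) (s := s).
  move=> q qs; have [_ [q_nonunit _]] := s_irr q qs.
  apply: nonunit_factor_dominant_index f_neq0 prim_f f0_neq0 size_lead _ q_nonunit.
  by rewrite fE (big_rem q qs).
rewrite -fE size_f in f_dom' lt_k.
move: lt_k; rewrite (dominant_index_unique f_dom' f_dom).
by move: (size s) le_jn => m; lia.
Qed.
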